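(* For every $d\ge 0$, the face poset $C^d$ of the $d$-dimensional hypercube satisfies $$\mathcal{M}_{C^d}(z)=(3-2z)^d-z(2-z)^d+1.$$
   Context: The face poset of a convex polytope with vertex set $V$ is the set of vertex sets of its faces (including the whole polytope) together with $\emptyset$, ordered by inclusion, ranked by dimension ($|\emptyset|=-1$). The Möbius function $\mu$ is $\mu[p,p]=1$, $\mu[p,q]=-\sum_{p\le s<q}\mu[p,s]$ for $p<q$, $0$ if $p\not\le q$; the Möbius polynomial is $\mathcal{M}_P(z)=\sum_{p\le q\in P}\mu[p,q]z^{|q|-|p|}$. *)

From HB Require Import structures.
From mathcomp Require Import all_boot all_order all_algebra.
Set Implicit Arguments. Unset Strict Implicit. Unset Printing Implicit Defensive.
Import Order.TTheory GRing.Theory Num.Theory.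
Local Open Scope ring_scope.

Section Mobius.
Variable T : finType.
Variable P : {set {set T}}.
Variable rk : {set T} -> int.

(* mobius_aux n p q: the recursion mu[p,p]=1,
   mu[p,q] = - sum_{s in P, p <= s < q} mu[p,s] for p < q, 0 otherwise;
   n is fuel (n = #|q|.+1 suffices since s \proper q forces #|s| < #|q|). *)
Fixpoint mobius_aux (n : nat) (p q : {set T}) : int :=
  match n with
  | 0 => 0
  | n'.+1 =>
      if p == q then 1
      else if p \subset q then
        - \sum_(s in P | (p \subset s) && (s \proper q)) mobius_aux n' p s
      else 0
  end.

Definition mobius (p q : {set T}) : int := mobius_aux #|q|.+1 p q.

Definition mobius_poly : {poly int} :=
  \sum_(p in P) \sum_(q in P | p \subset q)
      (mobius p q)%:P * 'X^(`|rk q - rk p|%N).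
End Mobius.

Definition cube_vertex (d : nat) := {ffun 'I_d -> bool}.

(* The nonempty face determined by a partial assignment f: coordinates i with
   f i = Some b are fixed to b, those with f i = None are free. *)
Definition cube_face (d : nat) (f : {ffun 'I_d -> option bool})
  : {set cube_vertex d} :=
  [set v : cube_vertex d | [forall i, if f i is Some b then v i == b else true]].

Definition cube_face_poset (d : nat) : {set {set cube_vertex d}} :=
  set0 |: [set cube_face f | f : {ffun 'I_d -> option bool}].

(* Dimension of a face: -1 for the empty face, otherwise the dimension of the
   affine hull of its vertex set, i.e. the number of coordinates on which the
   vertices of the face are not constant. *)
Definition cube_dim (d : nat) (q : {set cube_vertex d}) : int :=
  if q == set0 then -1
  else (#|[set i : 'I_d | [exists v in q, exists w in q, v i != w i]]|)%:Z.

From HB Require Import structures.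
From mathcomp Require Import all_boot all_order all_algebra.
From mathcomp Require Import zify ring.
Import GRing.Theory.
Local Open Scope ring_scope.
Set Implicit Arguments. Unset Strict Implicit.

(* The face poset of the cube is Eulerian: with sg q = (-1)^(dim q + 1), every
   nontrivial interval has sign sum 0, so mu[p,q] = sg p * sg q.  A nonempty face
   is a partial assignment f : 'I_d -> option bool, and the faces above it (or the
   faces in an interval) are products over the coordinates of choices in
   option bool.  Hence every row sum of the Mobius polynomial factors over the
   coordinates: the row of the empty face is 1 - z (2 - z)^d, and the row of a
   face f is (1 - z)^(number of fixed coordinates of f); summing the latter over
   all f gives (1 + 2 (1 - z))^d = (3 - 2z)^d. *)

Lemma sum_option_bool (R : nmodType) (F : option bool -> R) :
  \sum_(x : option bool) F x = F None + F (Some true) + F (Some false).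
Proof.
rewrite (bigD1 None) //= (reindex_onto Some (odflt false)); last by move=> [b|].
rewrite (eq_bigl xpredT); last by move=> b; rewrite /= eqxx.
by rewrite big_bool addrA.
Qed.

Lemma natr_forall_prod (R : comNzRingType) (I : finType) (B : I -> bool) :
  ([forall i, B i])%:R = \prod_i (B i)%:R :> R.
Proof.
case: (boolP [forall i, B i]) => [/forallP H | /forallPn [i Hi]].
  by rewrite big1 // => i _; rewrite H.
by rewrite (bigD1 i) //= (negbTE Hi) mul0r.
Qed.

Section EulerianMobius.
Variables (T : finType) (P : {set {set T}}) (sg : {set T} -> int).
Hypothesis sg_sq : forall p, sg p * sg p = 1.
Hypothesis interval_sum_sg : forall p q, p \in P -> q \in P -> p \proper q ->
  \sum_(s in P | (p \subset s) && (s \subset q)) sg s = 0.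

Lemma proper_interval_sum_sg p q : p \in P -> q \in P -> p \proper q ->
  \sum_(s in P | (p \subset s) && (s \proper q)) sg s = - sg q.
Proof.
move=> pP qP pq; have := interval_sum_sg pP qP pq.
rewrite (bigD1 q) /=; last by rewrite qP subxx andbT proper_sub.
move/eqP; rewrite addrC addr_eq0 => /eqP <-; apply: eq_bigl => s.
by rewrite properEneq -!andbA; do 2 congr (_ && _); rewrite andbC.
Qed.

Lemma mobius_aux_eulerian n p q : p \in P -> q \in P -> p \subset q ->
  (#|q| < n)%N -> mobius_aux P n p q = sg p * sg q.
Proof.
elim: n p q => [//|n IH] p q pP qP pq qn /=.
case: eqP => [<-|/eqP neq_pq]; first by rewrite sg_sq.
have pq' : p \proper q by rewrite properEneq neq_pq.
rewrite pq (eq_bigr (fun s => sg p * sg s)).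
  by rewrite -mulr_sumr proper_interval_sum_sg ?mulrN ?opprK.
move=> s /andP[sP /andP[ps sq]]; apply: IH => //.
by have := proper_card sq; lia.
Qed.

Lemma mobius_eulerian p q : p \in P -> q \in P -> p \subset q ->
  mobius P p q = sg p * sg q.
Proof. by move=> pP qP pq; apply: mobius_aux_eulerian. Qed.

End EulerianMobius.

Section Cube.
Variable d : nat.
Notation assignment := {ffun 'I_d -> option bool}.
Notation faces := (cube_face_poset d).
Implicit Types f g h : assignment.

Definition le_assignment f g := [forall i, (g i == None) || (g i == f i)].

Definition free_coords f : nat := \sum_i (f i == None : nat).

Definition freed_coords f g : nat :=
  \sum_i ((g i == None) && (f i != None) : nat).

Definition complete_vertex f b : cube_vertex d :=
  [ffun i => if f i is Some c then c else b].

Lemma complete_vertex_in f b : complete_vertex f b \in cube_face f.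
Proof. by rewrite inE; apply/forallP => i; rewrite ffunE; case: (f i). Qed.

Lemma cube_face_neq0 f : cube_face f != set0.
Proof. by apply/set0Pn; exists (complete_vertex f true); apply: complete_vertex_in. Qed.

Lemma cube_face_subset f g :
  (cube_face f \subset cube_face g) = le_assignment f g.
Proof.
apply/subsetP/forallP.
- move=> H i; apply/negPn/negP => Hn.
  have := H (complete_vertex f (~~ odflt true (g i))) (complete_vertex_in _ _).
  rewrite inE => /forallP/(_ i); rewrite ffunE.
  move: Hn; case: (g i) => [c|] //=; case: (f i) => [c'|] //=.
    by move=> Hn /eqP E; move: Hn; rewrite E eqxx.
  by case: c.
- move=> H v; rewrite !inE => /forallP Hv; apply/forallP => i.
  by move: (H i) (Hv i); case: (g i) => [c|] //= /eqP <-.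
Qed.

Lemma cube_face_inj : injective (@cube_face d).
Proof.
move=> f g E; apply/ffunP=> i.
have := cube_face_subset f g; have := cube_face_subset g f; rewrite E subxx.
move=> /esym/forallP/(_ i) + /esym/forallP/(_ i).
by case: (f i) (g i) => [a|] [b|] //= /eqP ->.
Qed.

Lemma cube_dim_face f : cube_dim (cube_face f) = (free_coords f)%:Z.
Proof.
rewrite /cube_dim (negbTE (cube_face_neq0 f)) -sum1_card big_mkcond /=.
congr (_%:Z); apply: eq_bigr => i _; rewrite inE.
case E: (f i) => [c|] /=.
  case: existsP => // -[v /andP[vF /existsP[w /andP[wF]]]].
  move: vF wF; rewrite !inE => /forallP/(_ i) + /forallP/(_ i).
  by rewrite E => /eqP -> /eqP ->; rewrite eqxx.
case: existsP => // -[]; exists (complete_vertex f true).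
rewrite complete_vertex_in /=; apply/existsP; exists (complete_vertex f false).
by rewrite complete_vertex_in /= !ffunE E.
Qed.

Lemma free_coords_le f g : le_assignment f g ->
  free_coords g = (free_coords f + freed_coords f g)%N.
Proof.
move=> /forallP le_fg; rewrite -big_split; apply: eq_bigr => i _ /=.
by have := le_fg i; case: (f i) (g i) => [[]|] [[]|].
Qed.

Lemma sum_cube_face_poset (R : nmodType) (F : {set cube_vertex d} -> R) :
  \sum_(s in faces) F s = F set0 + \sum_f F (cube_face f).
Proof.
rewrite big_setU1 /=; last first.
  by apply/imsetP => -[f _ E]; have := cube_face_neq0 f; rewrite -E eqxx.
by rewrite big_imset //; move=> f g _ _; apply: cube_face_inj.
Qed.

Definition cube_sign (q : {set cube_vertex d}) : int :=
  (-1) ^+ absz (cube_dim q + 1).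

Lemma cube_sign0 : cube_sign set0 = 1.
Proof. by rewrite /cube_sign /cube_dim eqxx. Qed.

Lemma cube_sign_face f :
  cube_sign (cube_face f) = - \prod_i (-1) ^+ (f i == None).
Proof.
rewrite /cube_sign cube_dim_face prodrXr.
have -> : absz ((free_coords f)%:Z + 1)%R = (free_coords f).+1 by lia.
by rewrite exprS mulN1r.
Qed.

Lemma cube_sign_sq q : cube_sign q * cube_sign q = 1.
Proof. by rewrite -expr2 sqrr_sign. Qed.

Lemma cube_interval_sum_sign0 g :
  \sum_(s in faces | (set0 \subset s) && (s \subset cube_face g)) cube_sign s = 0.
Proof.
rewrite big_mkcondr sum_cube_face_poset /= !sub0set /= cube_sign0.
rewrite (eq_bigr (fun h => - \prod_i
    (((g i == None) || (g i == h i))%:R * (-1) ^+ (h i == None)))); last first.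
  move=> h _; rewrite sub0set cube_face_subset cube_sign_face big_split /=.
  rewrite -natr_forall_prod -/(le_assignment h g).
  by case: (le_assignment h g); rewrite /= ?mul1r ?mul0r ?oppr0.
rewrite sumrN -(bigA_distr_bigA (fun i (t : option bool) =>
  ((g i == None) || (g i == t))%:R * (-1) ^+ (t == None) : int)) /=.
by rewrite big1 ?subrr // => i _; rewrite sum_option_bool; case: (g i) => [[]|].
Qed.

Lemma cube_interval_sum_sign f g : f != g -> le_assignment f g ->
  \sum_(s in faces | (cube_face f \subset s) && (s \subset cube_face g))
    cube_sign s = 0.
Proof.
move=> neq_fg le_fg.
rewrite big_mkcondr sum_cube_face_poset /= subset0 (negbTE (cube_face_neq0 f)).
rewrite add0r (eq_bigr (fun h => - \prod_i
    ((((h i == None) || (h i == f i))%:R * ((g i == None) || (g i == h i))%:R)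
      * (-1) ^+ (h i == None)))); last first.
  move=> h _; rewrite !cube_face_subset cube_sign_face !big_split /=.
  rewrite -!natr_forall_prod -/(le_assignment h g) -/(le_assignment f h).
  by case: (le_assignment f h); case: (le_assignment h g);
    rewrite /= ?mul1r ?mul0r ?oppr0.
rewrite sumrN -(bigA_distr_bigA (fun i (t : option bool) =>
  (((t == None) || (t == f i))%:R * ((g i == None) || (g i == t))%:R)
      * (-1) ^+ (t == None) : int)) /=.
have [i neq_i] : exists i, f i != g i.
  apply/existsP; apply: contraR neq_fg => /existsPn eq_fg.
  by apply/eqP/ffunP => i; apply/eqP; rewrite -[_ == _]negbK eq_fg.
have := forallP le_fg i; rewrite (bigD1 i) //= sum_option_bool; move: neq_i.
by case: (f i) (g i) => [[]|] [[]|] //= _ _; rewrite mul0r oppr0.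
Qed.

Lemma cube_face_posetP (p : {set cube_vertex d}) : p \in faces ->
  p = set0 \/ exists f, p = cube_face f.
Proof.
rewrite in_setU1 => /predU1P [->|/imsetP [f _ ->]]; first by left.
by right; exists f.
Qed.

Lemma cube_mobius p q : p \in faces -> q \in faces -> p \subset q ->
  mobius faces p q = cube_sign p * cube_sign q.
Proof.
apply: mobius_eulerian; first exact: cube_sign_sq.
move=> {}p {}q /cube_face_posetP[->|[f ->]] /cube_face_posetP[->|[g ->]] pq.
- by rewrite properE subxx in pq.
- exact: cube_interval_sum_sign0.
- by move/proper_sub: pq; rewrite subset0 (negbTE (cube_face_neq0 f)).
- apply: cube_interval_sum_sign; last first.
    by rewrite -cube_face_subset proper_sub.
  by apply: contraTneq pq => ->; rewrite properE subxx andbF.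
Qed.

Lemma cube_mobius_row0 :
  \sum_(q in faces | set0 \subset q)
     (mobius faces set0 q)%:P
       * 'X^(`|cube_dim q - cube_dim (set0 : {set cube_vertex d})|%N)
  = 1 - 'X * (2 - 'X) ^+ d :> {poly int}.
Proof.
rewrite big_mkcondr sum_cube_face_poset !sub0set cube_mobius ?sub0set ?setU11 //.
rewrite cube_sign0 mulr1 subrr expr0 mulr1 polyC1.
rewrite (eq_bigr (fun g => - ('X * \prod_i (- 'X) ^+ (g i == None)))); last first.
  move=> g _; rewrite cube_mobius ?sub0set ?setU11 ?inE ?imset_f ?orbT //.
  rewrite cube_sign0 mul1r cube_sign_face cube_dim_face /cube_dim eqxx.
  have -> : absz ((free_coords g)%:Z - -1)%R = (free_coords g).+1 by lia.
  rewrite !prodrXr -/(free_coords g) exprS polyCN polyC_exp polyCN polyC1.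
  by rewrite [in RHS]exprNn; ring.
rewrite sumrN -mulr_sumr -(bigA_distr_bigA (fun i (t : option bool) =>
   (- 'X) ^+ (t == None) : {poly int})) /=.
rewrite (eq_bigr (fun _ => 2 - 'X)); last first.
  by move=> i _; rewrite sum_option_bool /= expr1 expr0; ring.
by rewrite prodr_const card_ord.
Qed.

Lemma cube_mobius_row f :
  \sum_(q in faces | cube_face f \subset q)
     (mobius faces (cube_face f) q)%:P
       * 'X^(`|cube_dim q - cube_dim (cube_face f)|%N)
  = \prod_i (if f i is Some _ then 1 - 'X else 1) :> {poly int}.
Proof.
rewrite big_mkcondr sum_cube_face_poset subset0 (negbTE (cube_face_neq0 f)).
rewrite add0r.
(* The faces above f are the faces g coarsening f coordinatewise, and each
   coordinate freed by g contributes a factor -z. *)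
transitivity (\prod_i \sum_(t : option bool)
   (((t == None) || (t == f i))%:R * (- 'X) ^+ ((t == None) && (f i != None))
     : {poly int})); last first.
  by apply: eq_bigr => i _; rewrite sum_option_bool; case: (f i) => [[]|] /=;
    rewrite ?expr1 ?expr0; ring.
rewrite bigA_distr_bigA; apply: eq_bigr => g _.
rewrite cube_face_subset big_split /= -natr_forall_prod -/(le_assignment f g).
case: (boolP (le_assignment f g)) => [le_fg|_]; last by rewrite mul0r.
rewrite mul1r cube_mobius ?inE ?imset_f ?orbT ?cube_face_subset //.
rewrite !cube_sign_face mulrNN !prodrXr -!/(free_coords _) -exprD.
rewrite !cube_dim_face (free_coords_le le_fg) -/(freed_coords f g).
have -> : absz ((free_coords f + freed_coords f g)%N%:Z - (free_coords f)%:Z)%R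
  = freed_coords f g by lia.
rewrite addnA addnn -signr_odd oddD odd_double signr_odd.
by rewrite polyC_exp polyCN polyC1 [RHS]exprNn.
Qed.

Lemma sum_fixed_coords_prod :
  \sum_(f : assignment) \prod_i (if f i is Some _ then 1 - 'X else 1)
  = (3 - 2 *: 'X) ^+ d :> {poly int}.
Proof.
rewrite -(bigA_distr_bigA (fun i (t : option bool) =>
  if t is Some _ then 1 - 'X else 1 : {poly int})) /=.
rewrite (eq_bigr (fun _ => 3 - 2 *: 'X)) ?prodr_const ?card_ord //.
move=> i _; rewrite sum_option_bool -mul_polyC.
have -> : (2 : int)%:P = 2 :> {poly int} by rewrite -polyC_natr.
ring.
Qed.

End Cube.

Theorem mainTheorem9 (d : nat) :
  mobius_poly (cube_face_poset d) (@cube_dim d)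
  = (3 - 2 *: 'X) ^+ d - 'X * (2 - 'X) ^+ d + 1 :> {poly int}.
Proof.
rewrite /mobius_poly sum_cube_face_poset cube_mobius_row0.
rewrite (eq_bigr _ (fun f _ => cube_mobius_row f)) sum_fixed_coords_prod.
ring.
Qed.
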